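(* For every weight function $w$, every $n\ge1$ and every $1\le i\le n$, $$\xi_i(0)=\max_{-1<z_1<\dots<z_{i-1}<1}\ \min_{\substack{p\in S\\ p(z_1)=\dots=p(z_{i-1})=0}}\frac{\int_{-1}^1 t\,p(t)w(t)\,dt}{\int_{-1}^1 p(t)w(t)\,dt},$$ where $S$ is the set of all nonzero polynomials $p$ of degree at most $2n-2$ with $p\ge0$ on $[-1,1]$.
   Context: A weight function is a non-negative integrable function $w$ on $[-1,1]$ with nonzero integral. $\xi_1(0)<\dots<\xi_n(0)$ denote the zeros of the orthonormal polynomial of degree $n$ with respect to $w(t)\,dt$ on $[-1,1]$. *)

From HB Require Import structures.
From mathcomp Require Import all_boot all_order all_algebra.
From mathcomp Require Import all_classical all_reals all_analysis.
Set Implicit Arguments. Unset Strict Implicit. Unset Printing Implicit Defensive.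
Import Order.TTheory GRing.Theory Num.Theory.
Import numFieldNormedType.Exports.
Local Open Scope classical_set_scope.
Local Open Scope ring_scope.

Section Defs.
Variable R : realType.

Definition I11 : set R := `[(-1)%R, 1%R].

Definition int11 (f : R -> R) : R :=
  \int[@lebesgue_measure R]_(t in I11) f t.

Definition weight (w : R -> R) : Prop :=
  (forall t, I11 t -> 0 <= w t) /\
  (@lebesgue_measure R).-integrable I11 (fun t => (w t)%:E) /\
  int11 w != 0.

Definition is_orthonormal_poly (w : R -> R) (n : nat) (P : {poly R}) : Prop :=
  size P = n.+1 /\ 0 < lead_coef P /\
  (forall q : {poly R}, (size q <= n)%N ->
      int11 (fun t => P.[t] * q.[t] * w t) = 0) /\
  int11 (fun t => P.[t] ^+ 2 * w t) = 1.

Definition Spos (n : nat) : set {poly R} :=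
  [set p : {poly R} | p != 0 /\ (size p <= (2 * n).-1)%N /\
           forall t, I11 t -> 0 <= p.[t]].

Definition ratio (w : R -> R) (p : {poly R}) : R :=
  int11 (fun t => t * p.[t] * w t) / int11 (fun t => p.[t] * w t).

Definition admissible (m : nat) (z : 'I_m -> R) : Prop :=
  (forall j, -1 < z j < 1) /\ (forall j k : 'I_m, (j < k)%N -> z j < z k).

Definition ratios (w : R -> R) (n m : nat) (z : 'I_m -> R) : set R :=
  [set ratio w p | p in [set p : {poly R} | Spos n p /\ forall j, p.[z j] = 0]].

Definition is_min (A : set R) (x : R) : Prop :=
  A x /\ forall y, A y -> x <= y.

End Defs.

From Pilot Require Import Defs.
From HB Require Import structures.
From mathcomp Require Import all_boot all_order all_algebra.
From mathcomp Require Import all_classical all_reals all_analysis.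
From mathcomp Require Import zify ring lra.
Set Implicit Arguments. Unset Strict Implicit. Unset Printing Implicit Defensive.
Import Order.TTheory GRing.Theory Num.Theory.
Import numFieldNormedType.Exports.
Local Open Scope classical_set_scope.
Local Open Scope ring_scope.

(* The zeros xi_1 < ... < xi_n of P are the nodes of a Gauss quadrature rule
   with positive Christoffel weights lambda_k that is exact up to degree 2n - 1.
   Hence for p in S
     int (t - xi_i) p(t) w(t) dt = sum_k lambda_k p(xi_k) (xi_k - xi_i),
   while int p w > 0: a polynomial that is non-negative on [-1, 1] has double
   roots at the interior nodes, so within degree 2n - 2 it cannot vanish at all
   of them.  Thus the ratio of p is at most xi_i when p vanishes at the nodes
   after xi_i, and at least xi_i when it vanishes at the nodes before xi_i.
   For any z, the square of the product of the (X - z_j) and the (X - xi_k),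
   k > i, lies in S and gives min <= xi_i; for z = (xi_1, ..., xi_(i-1)) every
   admissible p has ratio >= xi_i and the same square attains xi_i.  The minima
   exist by compactness of the set of normalised coefficient vectors. *)

Lemma I11E (R : realType) (t : R) : I11 t <-> -1 <= t <= 1.
Proof. by rewrite /I11 /= in_itv. Qed.

(* Fermat: [(X - a) s] has a local minimum at [a], so its derivative [s] vanishes
   there. *)
Lemma mulXsubC_ge0_root (R : realType) (s : {poly R}) (a : R) : -1 < a < 1 ->
  (forall t, -1 <= t <= 1 -> 0 <= (('X - a%:P) * s).[t]) -> s.[a] = 0.
Proof.
move=> /andP[a_gtN1 a_lt1] q_ge0; set q := ('X - a%:P) * s.
have q_min : is_derive a 1 (horner q) 0.
  apply: (@derive1_at_min _ _ (-1) 1) => [|t _||t].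
  - lra.
  - exact: derivable_horner.
  - by rewrite in_itv /= a_gtN1 a_lt1.
  rewrite in_itv /= => /andP[t_gtN1 t_lt1].
  by rewrite /q hornerM hornerXsubC subrr mul0r q_ge0 // !ltW.
have dq_a : q^`().[a] = 0.
  rewrite -(@derive_val _ _ _ _ _ _ _ (is_derive_poly q a)).
  exact: (@derive_val _ _ _ _ _ _ _ q_min).
move: dq_a; rewrite /q derivM derivXsubC mul1r hornerD hornerM hornerXsubC.
by rewrite subrr mul0r addr0.
Qed.

Section WeightedIntegral.
Variables (R : realType) (w : R -> R).
Hypothesis w_weight : weight w.

Definition wint (p : {poly R}) : R := int11 (fun t => p.[t] * w t).

Let measurable_I11 : measurable (@I11 R). Proof. exact: measurable_itv. Qed.

Lemma integrable_horner_weight (p : {poly R}) :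
  (@lebesgue_measure R).-integrable (@I11 R) (EFin \o (fun t => p.[t] * w t)).
Proof.
have p_bounded : [bounded p.[x] | x in @I11 R].
  have : bounded_set (horner p @` (@I11 R)).
    apply: compact_bounded; apply: continuous_compact; last exact: segment_compact.
    by apply: continuous_subspaceT => x; exact: continuous_horner.
  move=> /=; rewrite /bounded_near; apply: filterS => M pM x I11x.
  by apply: pM; exists x.
have := @integrableMr _ _ _ (@lebesgue_measure R) _ measurable_I11 (horner p)
  (fun t => (w t)%:E) (@measurable_poly R p _) p_bounded w_weight.2.1.
by apply: eq_integrable.
Qed.

Lemma wintD p q : wint (p + q) = wint p + wint q.
Proof.
rewrite /wint /int11 -RintegralD //; try exact: integrable_horner_weight.
by apply: eq_Rintegral => x _; rewrite hornerD mulrDl.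
Qed.

Lemma wintZ a p : wint (a *: p) = a * wint p.
Proof.
rewrite /wint /int11 -RintegralZl //; last exact: integrable_horner_weight.
by apply: eq_Rintegral => x _; rewrite hornerZ mulrA.
Qed.

Lemma wint0 : wint 0 = 0.
Proof. by rewrite -(scale0r 0) wintZ mul0r. Qed.

Lemma wint_sum (I : Type) (s : seq I) (F : I -> {poly R}) :
  wint (\sum_(k <- s) F k) = \sum_(k <- s) wint (F k).
Proof. exact: (big_morph wint wintD wint0). Qed.

Lemma ler_wint p q : (forall t, I11 t -> p.[t] <= q.[t]) -> wint p <= wint q.
Proof.
move=> le_pq; apply: le_Rintegral => //; try exact: integrable_horner_weight.
by move=> x I11x; rewrite ler_wpM2r ?le_pq // w_weight.1.
Qed.

Lemma ratioE p : Defs.ratio w p = wint ('X * p) / wint p.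
Proof.
congr (_ / _); apply: eq_Rintegral => t _.
by rewrite hornerM hornerX.
Qed.

Lemma ratioZ a p : a != 0 -> Defs.ratio w (a *: p) = Defs.ratio w p.
Proof.
by move=> a0; rewrite !ratioE -scalerAr !wintZ invfM mulrACA mulfV // mul1r.
Qed.

End WeightedIntegral.

Section CoefficientVectors.
Variables (R : realType) (N : nat).

Lemma rVpolyE (c : 'rV[R]_N) : rVpoly c = \sum_(i < N) c 0 i *: 'X^i.
Proof.
rewrite {1}[c]row_sum_delta linear_sum; apply: eq_bigr => i _.
by rewrite linearZ /= rVpoly_delta.
Qed.

Lemma continuous_rVpoly_comp (f : {poly R} -> R) :
  {morph f : p q / p + q} -> (forall a p, f (a *: p) = a * f p) ->
  continuous (fun c : 'rV[R]_N => f (rVpoly c)).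
Proof.
move=> fD fZ.
have f0 : f 0 = 0 by rewrite -(scale0r 0) fZ mul0r.
have -> : (fun c : 'rV[R]_N => f (rVpoly c)) =
    \sum_(i < N) (fun c : 'rV[R]_N => c 0 i * f 'X^i).
  apply: funext => c; rewrite fct_sumE rVpolyE (big_morph f fD f0).
  by apply: eq_bigr => i _; rewrite fZ.
apply: (big_ind (fun g : 'rV[R]_N -> R => continuous g)) => [|g h gc hc|i _].
- exact: cst_continuous.
- by move=> x; apply: continuousD; [exact: gc | exact: hc].
- move=> x; apply: (@continuousM _ _ (fun c : 'rV[R]_N => c 0 i) (cst (f 'X^i))).
    exact: coord_continuous.
  exact: cst_continuous.
Qed.

Definition nonneg_roots_coefs m (z : 'I_m -> R) : set 'rV[R]_N :=
  [set c | (forall t, I11 t -> 0 <= (rVpoly c).[t]) /\ forall j, (rVpoly c).[z j] = 0].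

Lemma closed_nonneg_roots_coefs m (z : 'I_m -> R) : closed (nonneg_roots_coefs z).
Proof.
have horner_cont t : continuous (fun c : 'rV[R]_N => (rVpoly c).[t]).
  apply: (continuous_rVpoly_comp (f := fun p => p.[t])) => [p q|a p].
  - exact: hornerD.
  - exact: hornerZ.
have -> : nonneg_roots_coefs z =
    \bigcap_(t in @I11 R) ((fun c => (rVpoly c).[t]) @^-1` [set x | 0 <= x]) `&`
    \bigcap_(j in setT) ((fun c => (rVpoly c).[z j]) @^-1` [set 0]).
  rewrite eqEsubset; split => c /= [c_ge0 c_root].
  - by split => [t I11t | j _]; [exact: c_ge0 | exact: c_root].
  - by split => [t I11t | j]; [exact: c_ge0 | exact: c_root].
apply: closedI; apply: closed_bigI => ? _; apply: preimage_closed => [c _|].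
- exact: horner_cont.
- exact: closed_ge.
- exact: horner_cont.
- exact: closed_eq.
Qed.

Lemma compact_unit_nonneg_roots_coefs m (z : 'I_m -> R) :
  compact ([set c : 'rV[R]_N | `|c| = 1] `&` nonneg_roots_coefs z).
Proof.
apply: bounded_closed_compact.
  exists 1; split; first exact: num_real.
  by move=> M M_gt1 c [/= c_norm _]; rewrite c_norm ltW.
apply: closedI; last exact: closed_nonneg_roots_coefs.
apply: (@preimage_closed _ _ (fun c : 'rV[R]_N => `|c|) [set 1]).
- by move=> c _; exact: norm_continuous.
- exact: closed_eq.
Qed.

Lemma rVpoly_normalize (p : {poly R}) : p != 0 -> (size p <= N)%N ->
  exists2 c : 'rV[R]_N, `|c| = 1 & exists2 a : R, 0 < a & rVpoly c = a *: p.
Proof.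
move=> p_neq0 size_p; set v : 'rV[R]_N := poly_rV p.
have v_neq0 : `|v| != 0.
  apply: contra_neq p_neq0 => /normr0_eq0/(congr1 rVpoly).
  by rewrite poly_rV_K // linear0.
exists (`|v|^-1 *: v); first by rewrite normrZ normfV normr_id mulVf.
exists `|v|^-1; first by rewrite invr_gt0 lt_def v_neq0 normr_ge0.
by rewrite linearZ /= poly_rV_K.
Qed.

End CoefficientVectors.

Section RatiosMinimum.
Variables (R : realType) (w : R -> R) (n : nat).
Hypothesis w_weight : weight w.

Lemma continuous_ratio_rVpoly N (c : 'rV[R]_N) : wint w (rVpoly c) != 0 ->
  {for c, continuous (fun d : 'rV[R]_N => Defs.ratio w (rVpoly d))}.
Proof.
move=> wint_neq0.
have -> : (fun d : 'rV[R]_N => Defs.ratio w (rVpoly d)) =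
    (fun d => wint w ('X * rVpoly d)) \* (fun d => (wint w (rVpoly d))^-1).
  by apply: funext => d; rewrite ratioE.
have wint_cont (q : {poly R}) : continuous (fun c : 'rV[R]_N => wint w (q * rVpoly c)).
  apply: (continuous_rVpoly_comp (f := fun p => wint w (q * p))) => [p p'|a p].
  - by rewrite mulrDr wintD.
  - by rewrite -scalerAr wintZ.
apply: continuousM; first exact: wint_cont.
apply: continuousV => //.
by under [X in {for c, continuous X}]funext do rewrite -[rVpoly _]mul1r; exact: wint_cont.
Qed.

Hypothesis wint_Spos_gt0 : forall p, Spos n p -> 0 < wint w p.

Lemma ratios_has_min m (z : 'I_m -> R) (p0 : {poly R}) :
  Spos n p0 -> (forall j, p0.[z j] = 0) -> exists r, is_min (ratios w n z) r.
Proof.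
move=> Sp0 p0z; pose N := (2 * n).-1.
pose K := [set c : 'rV[R]_N | `|c| = 1] `&` nonneg_roots_coefs (N := N) z.
have K_Spos c : K c -> Spos n (rVpoly c) /\ forall j, (rVpoly c).[z j] = 0.
  move=> [/= c_norm [c_ge0 c_root]]; split=> //; split; last by split=> //; exact: size_poly.
  apply: contra_eq_neq c_norm => /(congr1 (@poly_rV R N)).
  by rewrite rVpolyK linear0 => ->; rewrite normr0 eq_sym oner_eq0.
have normalize p : Spos n p -> (forall j, p.[z j] = 0) ->
    exists2 c, K c & Defs.ratio w (rVpoly c) = Defs.ratio w p.
  move=> [p_neq0 [size_p p_ge0]] p_root.
  have [c c_norm [a a_gt0 cE]] := rVpoly_normalize p_neq0 size_p.
  exists c; last by rewrite cE ratioZ ?gt_eqF.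
  split=> //; split=> [t I11t | j]; rewrite cE hornerZ ?p_root ?mulr0 //.
  by apply: mulr_ge0; [exact: ltW | exact: p_ge0].
have K_nonempty : K !=set0 by have [c Kc _] := normalize p0 Sp0 p0z; exists c.
have ratio_cont : {within K, continuous (fun c : 'rV[R]_N => Defs.ratio w (rVpoly c))}.
  apply: continuous_in_subspaceT => c /set_mem /K_Spos[Sc _].
  by apply: continuous_ratio_rVpoly; rewrite gt_eqF ?wint_Spos_gt0.
have [c /set_mem Kc c_min] :=
  EVT_min_rV K_nonempty (@compact_unit_nonneg_roots_coefs R N m z) ratio_cont.
exists (Defs.ratio w (rVpoly c)); split; first by exists (rVpoly c) => //; exact: K_Spos.
move=> _ [p [Sp p_root] <-]; have [d Kd <-] := normalize p Sp p_root.
by apply: c_min; exact: mem_set.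
Qed.

End RatiosMinimum.

Section SquaredProduct.
Variable R : realType.

Definition sqprod (s : seq R) : {poly R} := (\prod_(x <- s) ('X - x%:P)) ^+ 2.

Lemma sqprod_ge0 s t : 0 <= (sqprod s).[t].
Proof. by rewrite horner_exp sqr_ge0. Qed.

Lemma sqprod_root s x : x \in s -> (sqprod s).[x] = 0.
Proof.
move=> xs; have /rootP prod_x : root (\prod_(y <- s) ('X - y%:P)) x.
  by rewrite root_prod_XsubC.
by rewrite horner_exp prod_x expr0n.
Qed.

Lemma Spos_sqprod n s : (0 < n)%N -> size s = n.-1 -> Spos n (sqprod s).
Proof.
move=> n_gt0 size_s.
have monic_prod : \prod_(x <- s) ('X - x%:P) \is monic by exact: monic_prod_XsubC.
split; first by rewrite expf_neq0 // monic_neq0.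
split; last by move=> t _; exact: sqprod_ge0.
by rewrite /sqprod expr2 size_Mmonic ?monic_neq0 // size_prod_XsubC size_s; lia.
Qed.

End SquaredProduct.

Section GaussQuadrature.
Variables (R : realType) (w : R -> R) (n : nat) (P : {poly R}) (xi : 'I_n -> R).
Hypothesis w_weight : weight w.
Hypothesis P_orthonormal : is_orthonormal_poly w n P.
Hypothesis xi_increasing : forall j k : 'I_n, (j < k)%N -> xi j < xi k.
Hypothesis P_root_xi : forall j, root P (xi j).

Local Notation wint := (wint w).

Lemma xi_inj : injective xi.
Proof.
move=> j k xi_jk; apply: val_inj.
by case: (ltngtP j k) => // /xi_increasing; rewrite xi_jk ltxx.
Qed.

Lemma leq_xi (j k : 'I_n) : (j <= k)%N -> xi j <= xi k.
Proof.
rewrite leq_eqVlt => /orP[/eqP jk | /xi_increasing/ltW //].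
by rewrite (val_inj jk).
Qed.

Lemma uniq_xi : uniq (map xi (enum 'I_n)).
Proof. by rewrite map_inj_uniq ?enum_uniq //; exact: xi_inj. Qed.

Definition nodepoly : {poly R} := \prod_(j < n) ('X - (xi j)%:P).

Definition lagr (k : 'I_n) : {poly R} := \prod_(j < n | j != k) ('X - (xi j)%:P).

Lemma monic_nodepoly : nodepoly \is monic.
Proof. exact: monic_prod_XsubC. Qed.

Lemma size_nodepoly : size nodepoly = n.+1.
Proof. by rewrite /nodepoly -big_enum size_prod_XsubC size_enum_ord. Qed.

Lemma nodepoly_factor (p : {poly R}) :
  (forall j, p.[xi j] = 0) -> exists q, p = q * nodepoly.
Proof.
move=> p_root.
have all_root : all (root p) (map xi (enum 'I_n)).
  by apply/allP => _ /mapP[j _ ->]; apply/rootP.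
have uniq_roots_xi : uniq_roots (map xi (enum 'I_n)) by rewrite uniq_rootsE uniq_xi.
have [q ->] := uniq_roots_prod_XsubC all_root uniq_roots_xi.
by exists q; rewrite big_map big_enum.
Qed.

Lemma P_nodepoly : P = lead_coef P *: nodepoly.
Proof.
have P_neq0 : P != 0 by rewrite -size_poly_gt0 P_orthonormal.1.
have [q P_eq] := nodepoly_factor (fun j => rootP (P_root_xi j)).
have q_neq0 : q != 0 by apply: contraNneq P_neq0 => q0; rewrite P_eq q0 mul0r.
have size_q : size q = 1%N.
  have := P_orthonormal.1; rewrite P_eq size_Mmonic ?monic_nodepoly //.
  by rewrite size_nodepoly addnS /=; lia.
rewrite P_eq (size1_polyC (eq_leq size_q)) lead_coefM (monicP monic_nodepoly).
by rewrite mulr1 lead_coefC mul_polyC.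
Qed.

Lemma nodepoly_lagr k : nodepoly = ('X - (xi k)%:P) * lagr k.
Proof. by rewrite /nodepoly (bigD1 k). Qed.

Lemma P_lagr k : P = lead_coef P *: (('X - (xi k)%:P) * lagr k).
Proof. by rewrite -nodepoly_lagr -P_nodepoly. Qed.

Lemma lagr_root j k : j != k -> (lagr k).[xi j] = 0.
Proof.
by move=> jk; rewrite /lagr horner_prod (bigD1 j) //= hornerXsubC subrr mul0r.
Qed.

Lemma lagr_node_neq0 k : (lagr k).[xi k] != 0.
Proof.
rewrite /lagr horner_prod; apply/prodf_neq0 => j jk.
by rewrite hornerXsubC subr_eq0; apply: contra jk => /eqP/xi_inj ->.
Qed.

Lemma size_lagr k : size (lagr k) = n.
Proof.
have lagr_neq0 : lagr k != 0.
  by apply: contraNneq (lagr_node_neq0 k) => ->; rewrite horner0.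
have := size_nodepoly; rewrite (nodepoly_lagr k) size_mul ?polyXsubC_eq0 //.
by rewrite size_XsubC => -[].
Qed.

Lemma wint_P_orth (q : {poly R}) : (size q <= n)%N -> wint (P * q) = 0.
Proof.
move=> size_q; rewrite -(P_orthonormal.2.2.1 q size_q).
by apply: eq_Rintegral => t _; rewrite hornerM.
Qed.

Lemma wint_P_sqr : wint (P ^+ 2) = 1.
Proof.
rewrite -P_orthonormal.2.2.2; apply: eq_Rintegral => t _.
by rewrite horner_exp.
Qed.

Lemma lagrange_interp (h : {poly R}) : (size h <= n)%N ->
  h = \sum_(k < n) (h.[xi k] / (lagr k).[xi k]) *: lagr k.
Proof.
move=> size_h; apply/eqP; rewrite -subr_eq0; apply/eqP.
apply: (@roots_geq_poly_eq0 _ _ (map xi (enum 'I_n))); last 1 first.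
- rewrite size_map size_enum_ord; apply: (leq_trans (size_polyD _ _)).
  rewrite geq_max size_h size_polyN; apply: (leq_trans (size_sum _ _ _)).
  apply/bigmax_leqP => k _; apply: (leq_trans (size_scale_leq _ _)).
  by rewrite size_lagr.
- apply/allP => _ /mapP[j _ ->]; apply/rootP.
  rewrite hornerD hornerN horner_sum (bigD1 j) //= big1 ?addr0.
    by rewrite hornerZ mulfVK ?lagr_node_neq0 // subrr.
  by move=> k; rewrite eq_sym => jk; rewrite hornerZ (lagr_root jk) mulr0.
- exact: uniq_xi.
Qed.

Definition christoffel k := wint (lagr k) / (lagr k).[xi k].

Lemma gauss_quadrature (f : {poly R}) : (size f <= 2 * n)%N ->
  wint f = \sum_(k < n) christoffel k * f.[xi k].
Proof.
move=> size_f; have P_neq0 : P != 0 by rewrite -size_poly_gt0 P_orthonormal.1.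
have size_P : size P = n.+1 := P_orthonormal.1.
have size_quo : (size (f %/ P)%R <= n)%N.
  by rewrite size_divp // size_P /= leq_subLR addnn -mul2n.
have size_rem : (size (f %% P)%R <= n)%N.
  by have := ltn_modp f P; rewrite P_neq0 size_P ltnS => ->.
have rem_xi k : (f %% P).[xi k] = f.[xi k].
  by rewrite {2}(divp_eq f P) hornerD hornerM (rootP (P_root_xi k)) mulr0 add0r.
rewrite {1}(divp_eq f P) wintD // mulrC wint_P_orth // add0r.
rewrite (lagrange_interp size_rem) wint_sum //; apply: eq_bigr => k _.
by rewrite wintZ // rem_xi /christoffel; ring.
Qed.

Lemma christoffel_lagr_sqr k :
  christoffel k * (lagr k).[xi k] ^+ 2 = wint (lagr k ^+ 2).
Proof.
rewrite gauss_quadrature; last first.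
  rewrite expr2; apply: (leq_trans (size_polyMleq _ _)); rewrite size_lagr; lia.
rewrite (bigD1 k) //= big1 ?addr0; first by rewrite horner_exp.
by move=> j jk; rewrite horner_exp lagr_root // expr0n mulr0.
Qed.

(* [P^2 = c^2 (t - xi_k)^2 lagr_k^2] with [(t - xi_k)^2 <= 2 (1 + xi_k^2)] on
   [-1, 1], and [P] has norm 1. *)
Lemma wint_lagr_sqr_gt0 k : 0 < wint (lagr k ^+ 2).
Proof.
set c := lead_coef P; set a := xi k; set B := 2 * (1 + a ^+ 2).
have B_gt0 : 0 < B by rewrite mulr_gt0 // ltr_pwDl // sqr_ge0.
have P_sqr_le : wint (P ^+ 2) <= wint ((c ^+ 2 * B) *: lagr k ^+ 2).
  apply: ler_wint => // t /I11E /andP[t_ge t_le].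
  rewrite {1}(P_lagr k) -/c hornerZ !horner_exp hornerZ hornerM hornerXsubC.
  have dist_le : (t - a) ^+ 2 <= B.
    have t_sqr : t ^+ 2 <= 1 by nra.
    by have := sqr_ge0 (t + a); rewrite /B; nra.
  rewrite !exprMn -mulrA ler_wpM2l ?sqr_ge0 // ler_wpM2r ?sqr_ge0 //.
have c_gt0 : 0 < c ^+ 2 * B by rewrite mulr_gt0 // exprn_gt0 // P_orthonormal.2.1.
move: P_sqr_le; rewrite wint_P_sqr wintZ // => /(lt_le_trans ltr01).
by rewrite pmulr_rgt0.
Qed.

Lemma christoffel_gt0 k : 0 < christoffel k.
Proof.
have := wint_lagr_sqr_gt0 k; rewrite -christoffel_lagr_sqr pmulr_lgt0 //.
by rewrite lt_def sqrf_eq0 lagr_node_neq0 sqr_ge0.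
Qed.

Lemma xi_interior k : -1 < xi k < 1.
Proof.
set c := lead_coef P; set a := xi k.
have P_factor t : P.[t] = c * (t - a) * (lagr k).[t].
  by rewrite {1}(P_lagr k) hornerZ hornerM hornerXsubC mulrA.
(* If [t - xi_k] had a constant sign on [-1, 1], [P^2] would be dominated by a
   multiple of [P * lagr k], whose integral vanishes. *)
suff one_sided K : (forall t, I11 t -> (t - a) ^+ 2 <= K * (t - a)) -> False.
  apply/andP; split; rewrite ltNge; apply/negP => a_out.
  - by apply: (one_sided (1 - a)) => t /I11E /andP[]; nra.
  - by apply: (one_sided (-1 - a)) => t /I11E /andP[]; nra.
move=> dominated.
have P_sqr_le : wint (P ^+ 2) <= wint ((c * K) *: (P * lagr k)).
  apply: ler_wint => // t I11t; rewrite horner_exp hornerZ hornerM !P_factor.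
  set l := (lagr k).[t]; set u := t - a.
  have -> : (c * u * l) ^+ 2 = (c * l) ^+ 2 * u ^+ 2 by ring.
  have -> : c * K * (c * u * l * l) = (c * l) ^+ 2 * (K * u) by ring.
  by rewrite ler_wpM2l ?sqr_ge0 ?dominated.
by move: P_sqr_le; rewrite wint_P_sqr wintZ // wint_P_orth ?size_lagr // mulr0 ler10.
Qed.

Lemma I11_xi k : I11 (xi k).
Proof. by apply/I11E; have /andP[? ?] := xi_interior k; rewrite !ltW. Qed.

Lemma nodepoly_sqr_factor (p : {poly R}) : (forall t, I11 t -> 0 <= p.[t]) ->
  (forall k, p.[xi k] = 0) -> exists q, p = q * nodepoly ^+ 2.
Proof.
move=> p_ge0 p_root; have [q p_eq] := nodepoly_factor p_root.
have q_root k : q.[xi k] = 0.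
  have p_eq_k : p = ('X - (xi k)%:P) * (q * lagr k).
    by rewrite p_eq (nodepoly_lagr k) mulrCA.
  have p_ge0_k t : -1 <= t <= 1 -> 0 <= (('X - (xi k)%:P) * (q * lagr k)).[t].
    by move=> t_in; rewrite -p_eq_k p_ge0 // I11E.
  have := mulXsubC_ge0_root (xi_interior k) p_ge0_k.
  by rewrite hornerM => /eqP; rewrite mulf_eq0 (negbTE (lagr_node_neq0 k)) orbF => /eqP.
have [r q_eq] := nodepoly_factor q_root.
by exists r; rewrite p_eq q_eq -mulrA -expr2.
Qed.

Lemma christoffel_mul_ge0 k (p : {poly R}) : (forall t, I11 t -> 0 <= p.[t]) ->
  0 <= christoffel k * p.[xi k].
Proof.
by move=> p_ge0; apply: mulr_ge0; [exact: ltW (christoffel_gt0 k) | exact: p_ge0 (I11_xi k)].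
Qed.

Lemma wint_nonneg_gt0 (p : {poly R}) : p != 0 -> (size p <= 2 * n)%N ->
  (forall t, I11 t -> 0 <= p.[t]) -> 0 < wint p.
Proof.
move=> p_neq0 size_p p_ge0.
have term_ge0 k : 0 <= christoffel k * p.[xi k] := christoffel_mul_ge0 k p_ge0.
rewrite gauss_quadrature // lt_def sumr_ge0 // andbT.
apply: contraNneq (p_neq0) => sum0.
have p_root k : p.[xi k] = 0.
  have := psumr_eq0P (fun k _ => term_ge0 k) sum0 => /(_ k isT) /eqP.
  by rewrite mulf_eq0 gt_eqF ?christoffel_gt0 //= => /eqP.
have [q p_eq] := nodepoly_sqr_factor p_ge0 p_root.
have q_neq0 : q != 0 by apply: contraNneq p_neq0 => q0; rewrite p_eq q0 mul0r.
have sqr_monic : nodepoly ^+ 2 \is monic by rewrite monic_exp ?monic_nodepoly.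
have := size_exp nodepoly 2; rewrite size_nodepoly /= => size_sqr.
have sqr_gt0 : (0 < size (nodepoly ^+ 2))%N by rewrite size_poly_gt0 monic_neq0.
have size_q : (0 < size q)%N by rewrite size_poly_gt0.
exfalso; move: size_p size_sqr sqr_gt0 size_q; rewrite p_eq size_Mmonic //.
by set s := size (nodepoly ^+ 2); lia.
Qed.

Lemma size_Spos (p : {poly R}) : Spos n p -> (size p < 2 * n)%N.
Proof.
by move=> [p_neq0 [size_p _]]; move: size_p; rewrite -size_poly_gt0 in p_neq0; lia.
Qed.

Lemma wint_Spos_gt0 (p : {poly R}) : Spos n p -> 0 < wint p.
Proof.
move=> Sp; have [p_neq0 [_ p_ge0]] := Sp.
by rewrite wint_nonneg_gt0 // ltnW ?size_Spos.
Qed.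

Lemma wint_mulXsubC (i : 'I_n) (p : {poly R}) : (size p < 2 * n)%N ->
  wint ('X * p) - xi i * wint p =
  \sum_(k < n) christoffel k * p.[xi k] * (xi k - xi i).
Proof.
move=> size_p; have size_Xp : (size ('X * p)%R <= 2 * n)%N.
  by rewrite (leq_trans (size_polyMleq _ _)) // size_polyX; lia.
rewrite !gauss_quadrature ?(ltnW size_p) // mulr_sumr -sumrB; apply: eq_bigr => k _.
by rewrite hornerM hornerX; ring.
Qed.

Lemma ratio_le_xi (i : 'I_n) (p : {poly R}) : Spos n p ->
  (forall k : 'I_n, (i < k)%N -> p.[xi k] = 0) -> Defs.ratio w p <= xi i.
Proof.
move=> Sp p_root; have [_ [_ p_ge0]] := Sp.
rewrite ratioE // ler_pdivrMr ?wint_Spos_gt0 // -subr_le0 wint_mulXsubC ?size_Spos //.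
apply: sumr_le0 => k _; case: (ltnP i k) => [ik | ki].
  by rewrite p_root ?mulr0 ?mul0r.
by rewrite mulr_ge0_le0 ?christoffel_mul_ge0 // subr_le0 leq_xi.
Qed.

Lemma xi_le_ratio (i : 'I_n) (p : {poly R}) : Spos n p ->
  (forall k : 'I_n, (k < i)%N -> p.[xi k] = 0) -> xi i <= Defs.ratio w p.
Proof.
move=> Sp p_root; have [_ [_ p_ge0]] := Sp.
rewrite ratioE // ler_pdivlMr ?wint_Spos_gt0 // -subr_ge0 wint_mulXsubC ?size_Spos //.
apply: sumr_ge0 => k _; case: (ltnP k i) => [ki | ik].
  by rewrite p_root ?mulr0 ?mul0r.
by rewrite mulr_ge0 ?christoffel_mul_ge0 // subr_ge0 leq_xi.
Qed.

Definition witness_poly (i : 'I_n) (z : 'I_i -> R) : {poly R} :=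
  sqprod (map z (enum 'I_i) ++ map (fun k => xi (insubd i k)) (iota i.+1 (n - i.+1))).

Lemma Spos_witness_poly (i : 'I_n) (z : 'I_i -> R) : Spos n (witness_poly z).
Proof.
have i_lt_n := ltn_ord i; apply: Spos_sqprod; first lia.
by rewrite size_cat !size_map -enumT size_enum_ord size_iota; lia.
Qed.

Lemma witness_poly_root (i : 'I_n) (z : 'I_i -> R) j : (witness_poly z).[z j] = 0.
Proof. by apply: sqprod_root; rewrite mem_cat map_f ?mem_enum. Qed.

Lemma witness_poly_root_xi (i : 'I_n) (z : 'I_i -> R) (k : 'I_n) :
  (i < k)%N -> (witness_poly z).[xi k] = 0.
Proof.
move=> ik; apply: sqprod_root; rewrite mem_cat; apply/orP; right.
apply/mapP; exists (val k); last by rewrite valKd.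
by rewrite mem_iota ik /=; have := ltn_ord k; lia.
Qed.

Lemma ratios_min_le_xi (i : 'I_n) (z : 'I_i -> R) :
  exists r, is_min (ratios w n z) r /\ r <= xi i.
Proof.
have [r r_min] := ratios_has_min w_weight wint_Spos_gt0 (Spos_witness_poly z)
  (witness_poly_root z).
exists r; split=> //.
apply: le_trans (ratio_le_xi (Spos_witness_poly z) (witness_poly_root_xi z)).
apply: r_min.2; exists (witness_poly z) => //.
by split; [exact: Spos_witness_poly | exact: witness_poly_root].
Qed.

Definition first_nodes (i : 'I_n) (j : 'I_i) : R := xi (widen_ord (ltnW (ltn_ord i)) j).

Lemma first_nodesE (i k : 'I_n) (ki : (k < i)%N) : first_nodes (Ordinal ki) = xi k.
Proof. by rewrite /first_nodes; congr xi; apply: val_inj. Qed.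

Lemma admissible_first_nodes (i : 'I_n) : admissible (first_nodes (i := i)).
Proof. by split=> [j | j k jk]; [exact: xi_interior | exact: xi_increasing]. Qed.

Lemma ratios_min_first_nodes (i : 'I_n) :
  is_min (ratios w n (first_nodes (i := i))) (xi i).
Proof.
set p := witness_poly (first_nodes (i := i)).
have Sp : Spos n p := Spos_witness_poly _.
have p_root_lt (k : 'I_n) : (k < i)%N -> p.[xi k] = 0.
  by move=> ki; rewrite -(first_nodesE ki) witness_poly_root.
split.
- exists p; first by split; [exact: Sp | exact: witness_poly_root].
  apply/eqP; rewrite eq_le ratio_le_xi ?xi_le_ratio //.
  exact: witness_poly_root_xi.
- move=> _ [q [Sq q_root] <-]; apply: xi_le_ratio Sq _ => k ki.
  by rewrite -(first_nodesE ki) q_root.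
Qed.

End GaussQuadrature.

Theorem lemma3p4 (R : realType) (w : R -> R) (n : nat) (P : {poly R})
    (xi : 'I_n -> R) (i : 'I_n) :
  weight w ->
  is_orthonormal_poly w n P ->
  (forall j k : 'I_n, (j < k)%N -> xi j < xi k) ->
  (forall j, root P (xi j)) ->
  (forall z : 'I_i -> R, admissible z ->
     exists m, is_min (ratios w n z) m /\ m <= xi i) /\
  (exists z : 'I_i -> R, admissible z /\ is_min (ratios w n z) (xi i)).
Proof.
move=> w_weight P_orthonormal xi_increasing P_root_xi.
split=> [z _ | ].
  exact: (ratios_min_le_xi w_weight P_orthonormal xi_increasing P_root_xi).
exists (first_nodes xi (i := i)); split.
  exact: (admissible_first_nodes w_weight P_orthonormal xi_increasing P_root_xi).
exact: (ratios_min_first_nodes w_weight P_orthonormal xi_increasing P_root_xi).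
Qed.
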